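(* Let $L$ be a finite simplicial complex of dimension $k$ with totally ordered vertices, let $M\in Z_k(L;\mathbb{Z}/2)$ be a $k$-cycle and $\Delta$ a $k$-simplex of $M$. Then the reduction mod 2 of the cochain $\mu$ (defined below) evaluates to $1\in\mathbb{Z}/2$ on the chain $O\Delta\times M\in C_{2k}(OL\times L;\mathbb{Z}/2)$, the sum of all cells $\sigma\times b$ with $\sigma$ a $k$-simplex of $OL$ satisfying $p(\sigma)=\Delta$ and $b$ a $k$-simplex of $M$.
   Context: For $L$ with vertex set $V=\{v_0<\dots<v_n\}$, $OL$ is the simplicial complex with vertex set $V\times\{\pm1\}$ (write $v^\pm=(v,\pm1)$) in which $\{(v_0,\varepsilon_0),\dots,(v_j,\varepsilon_j)\}$ spans a simplex iff the $v_i$ are distinct and $\{v_0,\dots,v_j\}$ is a simplex of $L$; $p:OL\to L$, $v^\pm\mapsto v$. Vertices of $OL$ are ordered $v_0^-<v_0^+<v_1^-<v_1^+<\dots<v_n^-<v_n^+$. The cochain $\mu\in C^{2k}(OL\times L;\mathbb{Z})$: for a $k$-simplex $\sigma=[x_0,\dots,x_k]$ of $OL$ and a $k$-simplex $b=[w_0,\dots,w_k]$ of $L$ (vertices in increasing order), regarding each $w_i$ as $w_i^-$, $\mu(\sigma,b)=1$ if $x_0\le w_0^-<x_1\le w_1^-<\dots<x_k\le w_k^-$ and $0$ otherwise. *)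

From HB Require Import structures.
From mathcomp Require Import all_boot all_order all_algebra.
Set Implicit Arguments. Unset Strict Implicit. Unset Printing Implicit Defensive.
Import GRing.Theory.

(* Vertices of L: 'I_n, totally ordered by the natural order
   (any finite totally ordered vertex set is order-isomorphic to some 'I_n).
   A simplex is a finite nonempty set of vertices. *)

Definition is_complex (V : finType) (L : {set {set V}}) : Prop :=
  (forall s, s \in L -> s != set0) /\
  (forall s t : {set V}, s \in L -> t \subset s -> t != set0 -> t \in L).

Definition has_dim (V : finType) (L : {set {set V}}) (k : nat) : Prop :=
  (forall s, s \in L -> #|s| <= k.+1) /\ (exists2 s, s \in L & #|s| = k.+1).

(* M is a set of k-simplices of L (a k-chain with Z/2 coefficients) which is
   a cycle: every (k-1)-simplex (nonempty, k >= 1) is a face of an even number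
   of simplices of M.  For k = 0 every 0-chain is a cycle (unreduced). *)
Definition is_cycle2 (V : finType) (L M : {set {set V}}) (k : nat) : Prop :=
  (forall b, b \in M -> (b \in L) && (#|b| == k.+1)) /\
  (forall t : {set V}, 0 < k -> #|t| = k -> ~~ odd #|[set b in M | t \subset b]|).

(* OL: vertex set 'I_n * bool, (v, true) = v^+, (v, false) = v^-.
   A set of signed vertices is a simplex iff nonempty, the underlying vertices
   are distinct, and they span a simplex of L. *)
Definition pr n (S : {set 'I_n * bool}) : {set 'I_n} := [set x.1 | x in S].

Definition OL n (L : {set {set 'I_n}}) : {set {set 'I_n * bool}} :=
  [set S : {set 'I_n * bool} | [&& S != set0, #|pr S| == #|S| & pr S \in L]].

(* order on the vertices of OL: v_0^- < v_0^+ < v_1^- < ... ; rank *)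
Definition orank n (x : 'I_n * bool) : nat := (2 * x.1 + x.2)%N.

(* sorted vertex lists (as ranks); w is regarded as w^-, of rank 2w *)
Definition sverts_O n (s : {set 'I_n * bool}) : seq nat :=
  sort leq [seq orank x | x <- enum s].
Definition sverts_L n (b : {set 'I_n}) : seq nat :=
  sort leq [seq (2 * val w)%N | w <- enum b].

Definition mu (n k : nat) (sigma : {set 'I_n * bool}) (b : {set 'I_n}) : int :=
  let xs := sverts_O sigma in
  let ws := sverts_L b in
  if [&& size xs == k.+1, size ws == k.+1,
         [forall i : 'I_k.+1, nth 0 xs i <= nth 0 ws i]%N &
         [forall i : 'I_k, nth 0 ws i < nth 0 xs i.+1]%N]
  then 1 else 0.

Definition ODeltaM n (L : {set {set 'I_n}}) (k : nat) (Delta : {set 'I_n})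
  (M : {set {set 'I_n}}) : {set {set 'I_n * bool} * {set 'I_n}} :=
  [set c | [&& c.1 \in OL L, #|c.1| == k.+1, pr c.1 == Delta & c.2 \in M]].

From HB Require Import structures.
From mathcomp Require Import all_boot all_order all_algebra.
From mathcomp Require Import zify.
Import GRing.Theory.
Set Implicit Arguments. Unset Strict Implicit. Unset Printing Implicit Defensive.

(* Sort the vertices of Delta as d_0 < ... < d_k.  A k-simplex sigma of OL over
   Delta is the same as a sign vector e : {0..k} -> {-,+}, its sorted rank list
   being 2 d_i + e_i, so mu(sigma, b) is the product over i of a condition
   Q_i(e_i) that involves e_i alone.  Summing over sigma therefore gives
   prod_i (Q_i(-) + Q_i(+)).  For b = Delta every factor is 0 + 1 = 1; for any
   other b some factor is 0 or 2, since if Q_i(-) != Q_i(+) for all i then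
   induction on i forces w_i = 2 d_i, i.e. b = Delta.  Hence the sum over
   O Delta x M is the number of b in M equal to Delta, which is 1. *)

Section SortedVertices.
Variable n : nat.
Implicit Types b : {set 'I_n}.

Lemma double_inj : injective (fun w : 'I_n => (2 * val w)%N).
Proof. by move=> a c /= /eqP; rewrite eqn_pmul2l // => /eqP /val_inj. Qed.

Lemma mem_sverts_L b v : ((2 * val v)%N \in sverts_L b) = (v \in b).
Proof. by rewrite /sverts_L mem_sort (mem_map double_inj) mem_enum. Qed.

Lemma sverts_LP b x : x \in sverts_L b -> exists2 v, v \in b & x = (2 * val v)%N.
Proof. by rewrite /sverts_L mem_sort => /mapP [v]; rewrite mem_enum => hv ->; exists v. Qed.

Lemma size_sverts_L b : size (sverts_L b) = #|b|.
Proof. by rewrite /sverts_L size_sort size_map -cardE. Qed.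

Lemma sverts_L_sorted b : sorted ltn (sverts_L b).
Proof.
rewrite ltn_sorted_uniq_leq sort_uniq sort_sorted ?andbT; last exact: leq_total.
by rewrite (map_inj_uniq double_inj) enum_uniq.
Qed.

Lemma sverts_L_uniq b : uniq (sverts_L b).
Proof. by have := sverts_L_sorted b; rewrite ltn_sorted_uniq_leq => /andP []. Qed.

Lemma sverts_L_inj : injective (@sverts_L n).
Proof. by move=> b c h; apply/setP => v; rewrite -!mem_sverts_L h. Qed.

Lemma sverts_L_ltS b j : j.+1 < #|b| -> nth 0 (sverts_L b) j < nth 0 (sverts_L b) j.+1.
Proof.
move=> hj; apply: (sorted_ltn_nth ltn_trans 0 (sverts_L_sorted b)) => //;
by rewrite unfold_in /= size_sverts_L ?(ltnW hj).
Qed.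

Lemma sverts_L_gapS b j : j.+1 < #|b| -> (nth 0 (sverts_L b) j).+1 < nth 0 (sverts_L b) j.+1.
Proof.
move=> hj; have := sverts_L_ltS hj.
have hj1 : j.+1 < size (sverts_L b) by rewrite size_sverts_L.
have [v _ ->] := sverts_LP (mem_nth 0 (ltnW hj1)).
have [w _ ->] := sverts_LP (mem_nth 0 hj1).
lia.
Qed.

Lemma orank_inj : injective (@orank n).
Proof.
move=> [v s] [w t]; rewrite /orank /=.
case: s; case: t => /=; rewrite ?addn0 ?addn1.
- by move/succn_inj/double_inj ->.
- by move/(congr1 odd); rewrite /= !oddM.
- by move/(congr1 odd); rewrite /= !oddM.
- by move/double_inj ->.
Qed.

End SortedVertices.

Lemma prodr_nat_bool (R : comPzSemiRingType) (I : finType) (P : pred I) :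
  (\prod_(i : I) ((P i)%:R : R))%R = ([forall i, P i]%:R)%R.
Proof.
have [/forallP allP | /forallPn [i not_Pi]] := boolP [forall i, P i].
  by rewrite big1 // => i _; rewrite allP.
by rewrite (bigD1 i) //= (negbTE not_Pi) mul0r.
Qed.

Section SignVectors.
Variables (n k : nat) (L : {set {set 'I_n}}) (Delta : {set 'I_n}).
Hypotheses (card_Delta : #|Delta| = k.+1) (Delta_in_L : Delta \in L).

Definition vrank (v : 'I_n) : nat := index (2 * val v)%N (sverts_L Delta).

Lemma vrank_lt v : v \in Delta -> vrank v < k.+1.
Proof. by move=> hv; rewrite -card_Delta -size_sverts_L index_mem mem_sverts_L. Qed.

Lemma nth_vrank v : v \in Delta -> nth 0 (sverts_L Delta) (vrank v) = (2 * val v)%N.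
Proof. by move=> hv; rewrite nth_index // mem_sverts_L. Qed.

Lemma vrank_inj : {in Delta &, injective vrank}.
Proof. by move=> v w hv hw e; apply: double_inj; rewrite /= -(nth_vrank hv) e nth_vrank. Qed.

Lemma vrank_onto i : i < k.+1 -> exists2 v, v \in Delta & vrank v = i.
Proof.
move=> hi; have hi' : i < size (sverts_L Delta) by rewrite size_sverts_L card_Delta.
have [v hv e] := sverts_LP (mem_nth 0 hi'); exists v => //.
by rewrite /vrank -e index_uniq // sverts_L_uniq.
Qed.

Definition signed_lifts : {set {set 'I_n * bool}} :=
  [set s | [&& s \in OL L, #|s| == k.+1 & pr s == Delta]].

Definition lift_signs (e : {ffun 'I_k.+1 -> bool}) : {set 'I_n * bool} :=
  [set (v, e (inord (vrank v))) | v in Delta].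

Definition signs_of (s : {set 'I_n * bool}) : {ffun 'I_k.+1 -> bool} :=
  [ffun i : 'I_k.+1 => [exists v in Delta, (vrank v == i) && ((v, true) \in s)]].

Lemma mem_lift_signs e v t :
  ((v, t) \in lift_signs e) = (v \in Delta) && (t == e (inord (vrank v))).
Proof. by apply/imsetP/andP => [[w hw [-> ->]] //| [hv /eqP ->]]; exists v. Qed.

Lemma pr_lift_signs e : pr (lift_signs e) = Delta.
Proof.
rewrite /pr /lift_signs -imset_comp; apply/setP => v.
by apply/imsetP/idP => [[w hw ->] //| hv]; exists v.
Qed.

Lemma card_lift_signs e : #|lift_signs e| = k.+1.
Proof. by rewrite card_imset // => a c /(congr1 fst). Qed.

Lemma lift_signs_in e : lift_signs e \in signed_lifts.
Proof.
rewrite !inE pr_lift_signs card_lift_signs card_Delta Delta_in_L !eqxx !andbT /=.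
by rewrite -card_gt0 card_lift_signs.
Qed.

Lemma lift_signsK : cancel lift_signs signs_of.
Proof.
move=> e; apply/ffunP => i; rewrite ffunE.
apply/existsP/idP => [[w /and3P [hw /eqP hi]]| hi].
  by rewrite mem_lift_signs hw /= hi inord_val => /eqP <-.
have [v hv hvi] := vrank_onto (ltn_ord i).
by exists v; rewrite hv hvi eqxx mem_lift_signs hv /= hvi inord_val hi.
Qed.

Lemma signs_ofK : {in signed_lifts, cancel signs_of lift_signs}.
Proof.
move=> s; rewrite !inE => /and3P [_ /eqP card_s /eqP pr_s].
apply/eqP; rewrite eqEcard card_lift_signs card_s leqnn andbT.
apply/subsetP => -[v t]; rewrite mem_lift_signs ffunE => /andP [hv /eqP ->].
have -> : [exists w in Delta,
    (vrank w == (inord (vrank v) : 'I_k.+1) :> nat) && ((w, true) \in s)] = ((v, true) \in s).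
  rewrite inordK ?vrank_lt //.
  apply/existsP/idP => [[w /and3P [hw /eqP hwv hws]]| hvs]; last by exists v; rewrite hv eqxx.
  by rewrite -(vrank_inj hw hv hwv).
move: hv; rewrite -pr_s => /imsetP [[w c] hwc /= ->].
by case: c hwc => hwc; [rewrite hwc | case: (boolP ((w, true) \in s))].
Qed.

Definition lifted_ranks (e : {ffun 'I_k.+1 -> bool}) : seq nat :=
  mkseq (fun i => nth 0 (sverts_L Delta) i + e (inord i)) k.+1.

Lemma lifted_ranks_sorted e : sorted ltn (lifted_ranks e).
Proof.
apply/(sortedP 0) => i; rewrite size_mkseq => hi.
rewrite !nth_mkseq ?(ltnW hi) //.
have := @sverts_L_gapS _ Delta i; rewrite card_Delta => /(_ hi).
by move: (leq_b1 (e (inord i))) (leq_b1 (e (inord i.+1))); lia.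
Qed.

Lemma sverts_O_lift_signs e : sverts_O (lift_signs e) = lifted_ranks e.
Proof.
have := lifted_ranks_sorted e; rewrite ltn_sorted_uniq_leq => /andP [uniq_X sorted_X].
rewrite /sverts_O -(sorted_sort leq_trans sorted_X).
apply/perm_sortP; [exact: leq_total | exact: leq_trans | exact: anti_leq |].
apply: uniq_perm => //; first by rewrite (map_inj_uniq (@orank_inj n)) enum_uniq.
move=> x; apply/mapP/idP => [[[v t]]|].
  rewrite mem_enum mem_lift_signs => /andP [hv /eqP ->] ->.
  apply/mapP; exists (vrank v); first by rewrite mem_iota add0n vrank_lt.
  by rewrite nth_vrank.
rewrite /lifted_ranks /mkseq => /mapP [i]; rewrite mem_iota add0n => hi ->.
have [v hv hvi] := vrank_onto hi.
exists (v, e (inord i)); first by rewrite mem_enum mem_lift_signs hv hvi eqxx.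
by rewrite /orank /= -hvi nth_vrank.
Qed.

(* The i-th pair of inequalities x_(i-1) <= w_(i-1) < x_i <= w_i in mu, read
   with x_i = 2 d_i + t. *)
Definition interlaced (b : {set 'I_n}) (i : nat) (t : bool) : bool :=
  (nth 0 (sverts_L Delta) i + t <= nth 0 (sverts_L b) i) &&
  ((i == 0) || (nth 0 (sverts_L b) i.-1 < nth 0 (sverts_L Delta) i + t)).

Lemma mu_lift_signs (b : {set 'I_n}) e : #|b| = k.+1 ->
  mu k (lift_signs e) b = Posz [forall i : 'I_k.+1, interlaced b i (e i)].
Proof.
move=> card_b; rewrite /mu sverts_O_lift_signs size_mkseq size_sverts_L card_b !eqxx.
have nth_X (i : 'I_k.+1) : nth 0 (lifted_ranks e) i = nth 0 (sverts_L Delta) i + e i.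
  by rewrite /lifted_ranks nth_mkseq // inord_val.
rewrite /=; case: ifP => [/andP [/forallP le_xw /forallP lt_wx]|].
  apply/esym/eqP; rewrite eqz_nat eqb1; apply/forallP => i.
  rewrite /interlaced -nth_X le_xw /=; case: i => [[|j] hj] //=.
  by have := lt_wx (Ordinal (hj : j < k)).
move/negbT; rewrite negb_and => /orP no_mu; apply/esym/eqP; rewrite eqz_nat eqb0.
apply/forallP => inter; case: no_mu => /forallP [] i.
  by rewrite nth_X; case/andP: (inter i).
have hi : i.+1 < k.+1 by rewrite ltnS.
by case/andP: (inter (Ordinal hi)) => _; rewrite -(nth_X (Ordinal hi)).
Qed.

Lemma interlaced_self i : i < k.+1 ->
  interlaced Delta i true = false /\ interlaced Delta i false = true.
Proof.
rewrite /interlaced addn1 addn0 ltnn leqnn; case: i => [|j] hj; split=> //=.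
by rewrite ltnW // sverts_L_gapS // card_Delta.
Qed.

Lemma interlaced_flip_eq (b : {set 'I_n}) : #|b| = k.+1 ->
  (forall i, i < k.+1 -> interlaced b i true != interlaced b i false) -> b = Delta.
Proof.
move=> card_b flip; apply: sverts_L_inj.
have flip_eq a w : (a + true <= w) != (a + false <= w) -> w = a.
  by rewrite addn0 addn1; case: ltngtP.
have nth_eq i : i < k.+1 -> nth 0 (sverts_L b) i = nth 0 (sverts_L Delta) i.
  elim: i => [|i IH] hi; first by apply: flip_eq; have := flip 0 hi; rewrite /interlaced !andbT.
  apply: flip_eq; have := flip i.+1 hi; rewrite /interlaced /= IH ?(ltnW hi) //.
  have hlt : nth 0 (sverts_L Delta) i < nth 0 (sverts_L Delta) i.+1.
    by apply/ltnW/sverts_L_gapS; rewrite card_Delta.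
  by rewrite !(leq_trans hlt (leq_addr _ _)) !andbT.
apply: (eq_from_nth (x0 := 0)); first by rewrite !size_sverts_L card_b card_Delta.
by move=> i; rewrite size_sverts_L card_b => /nth_eq.
Qed.

Lemma prod_sum_interlaced (b : {set 'I_n}) : #|b| = k.+1 ->
  (\prod_(i : 'I_k.+1) \sum_(t : bool) ((interlaced b i t)%:R : 'Z_2))%R = ((b == Delta)%:R)%R.
Proof.
move=> card_b; under eq_bigr do rewrite big_bool.
have [-> | b_neq] := eqP.
  by rewrite big1 // => i _; have [-> ->] := interlaced_self (ltn_ord i); apply/val_inj.
have [i same_i | all_flip] :=
  pickP [pred i : 'I_k.+1 | interlaced b i true == interlaced b i false].
  have double0 (c : bool) : (c%:R + c%:R : 'Z_2)%R = 0%R by case: c; apply/val_inj.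
  by rewrite (bigD1 i) //= (eqP same_i) double0 mul0r.
case: b_neq; apply: interlaced_flip_eq => // i hi.
by have /negbT := all_flip (Ordinal hi).
Qed.

Lemma sum_mu_signed_lifts (b : {set 'I_n}) : #|b| = k.+1 ->
  (\sum_(s in signed_lifts) ((mu k s b)%:~R : 'Z_2))%R = ((b == Delta)%:R)%R.
Proof.
move=> card_b.
have lift_bij : {on [pred s | s \in signed_lifts], bijective lift_signs}.
  by exists signs_of => [e _|]; [exact: lift_signsK | exact: signs_ofK].
rewrite (reindex _ lift_bij) /= (eq_bigl xpredT) => [|e]; last by rewrite lift_signs_in.
rewrite -(prod_sum_interlaced card_b) bigA_distr_bigA /=.
apply: eq_bigr => e _; rewrite mu_lift_signs // prodr_nat_bool.
by case: [forall _, _].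
Qed.

End SignVectors.

Theorem lemma4p4 (n k : nat) (L M : {set {set 'I_n}}) (Delta : {set 'I_n})
  (hL : is_complex L) (hdim : has_dim L k) (hM : is_cycle2 L M k)
  (hDelta : Delta \in M) :
  (\sum_(c in ODeltaM L k Delta M) ((mu k c.1 c.2)%:~R : 'Z_2))%R = 1%R.
Proof.
have [M_simplices _] := hM.
have /andP [Delta_in_L /eqP card_Delta] := M_simplices _ hDelta.
rewrite (eq_bigl [pred c | (c.1 \in signed_lifts k L Delta) && (c.2 \in M)]); last first.
  by move=> [s b]; rewrite !inE /= !andbA.
rewrite -(pair_big_dep (mem (signed_lifts k L Delta)) (fun _ b => b \in M)
            (fun s b => ((mu k s b)%:~R : 'Z_2)%R)) /= exchange_big /=.
rewrite (eq_bigr (fun b => ((b == Delta)%:R : 'Z_2)%R)) => [|b b_in_M]; last first.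
  by have /andP [_ /eqP card_b] := M_simplices _ b_in_M; exact: sum_mu_signed_lifts.
by rewrite (bigD1 Delta) //= eqxx big1 ?addr0 // => b /andP [_ /negbTE ->].
Qed.
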